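(* Let $n\ge 2$, let $P\neq[n,n-1,\ldots,1]$ be an arithmetically progressed permutation with ratio $k$, and let $\mathsf{T}_P$ be its associated ternary string. If $\mathsf{T}_P$ contains exactly two distinct characters, then $\mathsf{BWT}_{\mathsf{T}_P}$ consists of exactly $2$ runs; if $\mathsf{T}_P$ contains exactly three distinct characters, then $\mathsf{BWT}_{\mathsf{T}_P}$ consists of exactly $3$ runs.
   Context: A run of a string is a maximal block of consecutive equal characters. Alphabet $\{\mathtt{a}<\mathtt{b}<\mathtt{c}\}$, lexicographic order with a proper prefix smaller than the longer string; suffix array $\mathsf{SA}_{\mathsf{T}}$: permutation of $[1..n]$ such that $\mathsf{T}[\mathsf{SA}_{\mathsf{T}}[i]..n]$ is the $i$-th smallest suffix. $x\bmod n$ denotes the representative of $x$ modulo $n$ in $[1..n]$. An arithmetically progressed permutation of length $n$ with ratio $k\in[1..n-1]$ is a permutation $P=[p_1,\ldots,p_n]$ of $[1..n]$ with $p_{i+1}=p_i+k\bmod n$. Ternary string associated with $P$: cut $P$ immediately after the entry $n-k$ and immediately after the entry $(p_1-k-1)\bmod n$, giving consecutive possibly empty blocks $A,B,C$ with $P=ABC$; set $\mathsf{T}_P[p_i]=\mathtt{a},\mathtt{b},\mathtt{c}$ according as $p_i$ lies in $A$, $B$, $C$. BWT: $\mathsf{BWT}_{\mathsf{T}}[i]=\mathsf{T}[\mathsf{SA}_{\mathsf{T}}[i]-1\bmod n]$. *)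

(* Strings over {a<b<c} are encoded as seq nat
   with a = 0, b = 1, c = 2; positions are 1-based as in the paper. *)
From mathcomp Require Import all_boot.
Set Implicit Arguments. Unset Strict Implicit. Unset Printing Implicit Defensive.

Definition modr (x n : nat) : nat := if x %% n == 0 then n else x %% n.

Fixpoint lexle (s t : seq nat) : bool :=
  match s, t with
  | [::], _ => true
  | _ :: _, [::] => false
  | x :: s', y :: t' => (x < y) || ((x == y) && lexle s' t')
  end.

Definition charAt (T : seq nat) (i : nat) : nat := nth 0 T i.-1.

Definition suffix (T : seq nat) (i : nat) : seq nat := drop i.-1 T.

Definition SA (T : seq nat) : seq nat :=
  sort (fun i j => lexle (suffix T i) (suffix T j)) (iota 1 (size T)).

Definition BWT (T : seq nat) : seq nat :=
  [seq charAt T (modr (i - 1) (size T)) | i <- SA T].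

Definition runs (s : seq nat) : nat :=
  count (fun i => (i == 0) || (nth 0 s i != nth 0 s i.-1)) (iota 0 (size s)).

Definition AP_perm (n k : nat) (P : seq nat) : Prop :=
  [/\ 1 <= k <= n - 1, perm_eq P (iota 1 n) &
      forall i, i.+1 < n -> nth 0 P i.+1 = modr (nth 0 P i + k) n].

(* the ternary string associated with P (ratio k), P = A B C;
   the two cut points are taken in the order they occur in P *)
Definition ternary (n k : nat) (P : seq nat) : seq nat :=
  let i1 := index (n - k) P in
  let i2 := index (modr (head 0 P + (n - k) - 1) n) P in
  let c1 := (minn i1 i2).+1 in
  let c2 := (maxn i1 i2).+1 in
  [seq (let j := index p P in if j < c1 then 0 else if j < c2 then 1 else 2)
  | p <- iota 1 n].

From Pilot Require Import Defs.
From mathcomp Require Import all_boot zify.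
Set Implicit Arguments. Unset Strict Implicit. Unset Printing Implicit Defensive.

(* Let P be arithmetically progressed with ratio k and T = T_P.  Position p of
   T carries the letter of the block (A, B or C) of P containing p, so reading
   T in the order of P gives a word a^i b^j c^l of three blocks.
   (1) Suffix order: if p is not the last entry of P, then T[p..] <= T[p+k..]
       (indices mod n).  Indeed T[p] <= T[p+k], and when the letters agree the
       comparison passes to the pair (p+1, p+1+k), which satisfies the same
       hypothesis because neither cut of P lies between p and p+k.  Hence the
       suffix array of T is P itself.
   (2) BWT: the predecessor p-1 of the entry P[j] sits at position j+s of P
       for a fixed shift s (the second cut), so the BWT is the three-block
       word read from a cut, i.e. a rotation of a^i b^j c^l at a block border.
   (3) Such a rotation is again a word of at most three blocks with pairwise
       distinct letters, and the letters occurring in it are those of T.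
   So the number of runs of BWT(T) equals the number of distinct letters of T,
   which gives the corollary. *)

Lemma lexle_total s t : lexle s t || lexle t s.
Proof.
elim: s t => [|x s IH] [|y t] //=.
by case: (ltngtP x y) => //= ->; rewrite eqxx /=; exact: IH.
Qed.

Lemma lexle_trans s t u : lexle s t -> lexle t u -> lexle s u.
Proof.
elim: s t u => [|x s IH] [|y t] [|z u] //=.
case/orP=> [lxy|/andP[/eqP-> H1]]; case/orP=> [lyz|/andP[/eqP<- H2]].
- by rewrite (ltn_trans lxy lyz).
- by rewrite lxy.
- by rewrite lyz.
- by rewrite eqxx (IH _ _ H1 H2) orbT.
Qed.

Lemma lexle_anti s t : lexle s t -> lexle t s -> s = t.
Proof.
elim: s t => [|x s IH] [|y t] //=.
case/orP=> [lxy|/andP[/eqP-> H1]]; case/orP=> [lyx|/andP[/eqP He H2]].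
- by have := ltn_trans lxy lyx; rewrite ltnn.
- by move: lxy; rewrite He ltnn.
- by move: lyx; rewrite ltnn.
- by rewrite (IH _ H1 H2).
Qed.

Lemma modr_spec x n : 0 < n -> x < n + n ->
  [\/ x = 0 /\ modr x n = n, 0 < x <= n /\ modr x n = x
    | n < x /\ modr x n = x - n].
Proof.
move=> n0 xn; rewrite /modr.
case: (ltngtP x n) => h.
- case: (posnP x) => [->|x0]; first by rewrite mod0n eqxx; constructor 1.
  by rewrite modn_small // ifN; [constructor 2; lia | lia].
- have -> : x %% n = x - n.
    have {1}-> : x = (x - n) + n by lia.
    by rewrite modnDr modn_small //; lia.
  by rewrite ifN; [constructor 3; lia | lia].
- by rewrite h modnn eqxx; constructor 2; lia.
Qed.
Arguments modr_spec : clear implicits.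

(* Decide a linear goal containing nested residues modr t n (each argument
   t < 2n), by eliminating the innermost residues with modr_spec. *)
Ltac modr_lia :=
  repeat match goal with |- context [modr ?t ?n] =>
    lazymatch t with context [modr _ _] => fail | _ =>
      let E := fresh "E" in
      have [[? E]|[? E]|[? E]] := modr_spec t n ltac:(lia) ltac:(lia);
      rewrite E; clear E end end; lia.

Lemma modr_pred_shift x k n : 1 <= x <= n -> k < n ->
  modr (modr (x - 1) n + k) n = modr (modr (x + k) n - 1) n.
Proof. by move=> hx hk; modr_lia. Qed.

Lemma modr_sub_shift p k n : 1 <= p <= n -> 0 < k < n ->
  modr (modr (p + (n - k) - 1) n + k) n = modr (p - 1) n.
Proof. by move=> hp hk; modr_lia. Qed.

Lemma modr_succ_shift x k n : 1 <= x < n -> k < n -> modr (x + k) n != n ->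
  modr (x.+1 + k) n = (modr (x + k) n).+1.
Proof. by move=> hx hk; modr_lia. Qed.

Lemma modr_succ_shift_back x k n : 1 <= x < n -> 0 < k < n ->
  modr (modr (x.+1 + k) n + (n - k) - 1) n = x.
Proof. by move=> hx hk; modr_lia. Qed.

Lemma modr_shift_eq_n x k n : 1 <= x <= n -> k < n ->
  modr (x + k) n = n -> x = n - k.
Proof. by move=> hx hk; modr_lia. Qed.

Lemma modr_pred_neq p n : 1 < n -> 0 < p <= n -> modr (p - 1) n != p.
Proof. by move=> hn hp; modr_lia. Qed.

Lemma modr_add_inj x y k n : 1 <= x <= n -> 1 <= y <= n -> k < n ->
  modr (x + k) n = modr (y + k) n -> x = y.
Proof. by move=> hx hy hk; modr_lia. Qed.

Fixpoint changes (x : nat) (s : seq nat) : nat :=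
  if s is y :: s' then (y != x) + changes y s' else 0.

Lemma runs_cons x s : runs (x :: s) = (changes x s).+1.
Proof.
rewrite /runs /= add1n; congr _.+1.
rewrite -[1]addn0 iotaDl count_map.
elim: s x => [|y s IH] x //=; rewrite -(IH y) -[1]addn0 iotaDl !count_map.
by congr (_ + _); apply: eq_count => i.
Qed.

Lemma changes_nseq x a t : changes x (nseq a x ++ t) = changes x t.
Proof. by elim: a => //= a ->; rewrite eqxx. Qed.

Lemma runs_three_blocks a b c (x y z : nat) : x != y -> y != z -> z != x ->
  runs (nseq a x ++ nseq b y ++ nseq c z) = (0 < a) + (0 < b) + (0 < c).
Proof.
move=> xy yz zx; have yx : y != x by rewrite eq_sym.
have zy : z != y by rewrite eq_sym.
have changes0 v m : changes v (nseq m v) = 0.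
  by have := changes_nseq v m [::]; rewrite cats0.
case: a => [|a]; case: b => [|b]; case: c => [|c] //=;
  by rewrite runs_cons; do ! rewrite ?cats0 ?changes_nseq ?changes0 /= ?yx ?zy ?zx.
Qed.

Lemma undup_three_blocks a b c (x y z : nat) : x != y -> y != z -> z != x ->
  size (undup (nseq a x ++ nseq b y ++ nseq c z)) = (0 < a) + (0 < b) + (0 < c).
Proof.
move=> xy yz zx; have xz : x != z by rewrite eq_sym.
pose w := [seq v <- [:: x; y; z] | v \in nseq a x ++ nseq b y ++ nseq c z].
have /perm_size -> : perm_eq (undup (nseq a x ++ nseq b y ++ nseq c z)) w.
  apply: uniq_perm; rewrite ?undup_uniq ?filter_uniq //= ?inE ?negb_or ?xy ?xz ?yz //.
  move=> v; rewrite mem_undup mem_filter !inE !mem_cat !mem_nseq.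
  by case: (v =P x); case: (v =P y); case: (v =P z); rewrite ?andbF ?andbT.
rewrite /w {w} /= !mem_cat !mem_nseq !eqxx (negbTE xy) (negbTE xz) (negbTE yz).
rewrite eq_sym (negbTE xy) eq_sym (negbTE xz) eq_sym (negbTE yz).
by case: a; case: b; case: c.
Qed.

Lemma runs_three_blocks_undup a b c (x y z : nat) :
  x != y -> y != z -> z != x ->
  runs (nseq a x ++ nseq b y ++ nseq c z) =
  size (undup (nseq a x ++ nseq b y ++ nseq c z)).
Proof. by move=> xy yz zx; rewrite runs_three_blocks // undup_three_blocks. Qed.

Definition label (c1 c2 j : nat) : nat :=
  if j < c1 then 0 else if j < c2 then 1 else 2.

Lemma label_mono c1 c2 i j : i <= j -> label c1 c2 i <= label c1 c2 j.
Proof. by rewrite /label => ij; repeat case: ifP => ?; lia. Qed.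

Lemma label_no_cut c1 c2 i : c1 <= c2 ->
  label c1 c2 i = label c1 c2 i.+1 -> i.+1 != c1 /\ i.+1 != c2.
Proof. by rewrite /label => h; repeat case: ifP => ?; lia. Qed.

Lemma label_block c1 c2 a b v : (forall j, a <= j < a + b -> label c1 c2 j = v) ->
  map (label c1 c2) (iota a b) = nseq b v.
Proof.
move=> H; transitivity (map (fun=> v) (iota a b)).
  by apply/eq_in_map => j; rewrite mem_iota => /H.
by elim: b a {H} => //= b IH a; rewrite IH.
Qed.

Definition cutA (n k : nat) (P : seq nat) : nat := index (n - k) P.
Definition cutB (n k : nat) (P : seq nat) : nat :=
  index (modr (head 0 P + (n - k) - 1) n) P.
Definition cut1 (n k : nat) (P : seq nat) : nat :=
  (minn (cutA n k P) (cutB n k P)).+1.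
Definition cut2 (n k : nat) (P : seq nat) : nat :=
  (maxn (cutA n k P) (cutB n k P)).+1.

Lemma ternaryE n k P :
  ternary n k P = [seq label (cut1 n k P) (cut2 n k P) (index p P) | p <- iota 1 n].
Proof. by []. Qed.

Lemma suffix_cons (T : seq nat) x : 1 <= x <= size T ->
  Defs.suffix T x = nth 0 T x.-1 :: Defs.suffix T x.+1.
Proof.
by move=> hx; rewrite /Defs.suffix (drop_nth 0) ?prednK //; lia.
Qed.
Arguments suffix_cons : clear implicits.

Lemma size_ternary n k P : size (ternary n k P) = n.
Proof. by rewrite size_map size_iota. Qed.

Lemma rot_iota0 s n : s <= n ->
  rot s (iota 0 n) = [seq (j + s) %% n | j <- iota 0 n].
Proof.
move=> sn; rewrite /rot drop_iota take_iota add0n (minn_idPl sn).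
have -> : iota 0 n = iota 0 (n - s) ++ iota (n - s) s by rewrite -iotaD subnK.
rewrite map_cat; congr (_ ++ _).
  rewrite -[s in iota s]addn0 iotaDl; apply/eq_in_map => j.
  by rewrite mem_iota /= => hj; rewrite modn_small; lia.
rewrite -[n - s]addn0 iotaDl -map_comp -[LHS]map_id.
apply/eq_in_map => j; rewrite mem_iota /= => hj.
have -> : n - s + j + s = j + n by lia.
by rewrite modnDr modn_small; lia.
Qed.

Section ArithmeticProgression.

Variables (n k : nat) (P : seq nat).
Hypotheses (n_ge2 : 2 <= n) (apP : AP_perm n k P).

Local Notation T := (ternary n k P).
Local Notation c1 := (cut1 n k P).
Local Notation c2 := (cut2 n k P).
Local Notation lab := (label c1 c2).

Lemma k_range : 0 < k < n.
Proof. by case: apP => /andP[? ?] _ _; lia. Qed.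

Lemma size_P : size P = n.
Proof. by case: apP => _ pP _; rewrite (perm_size pP) size_iota. Qed.

Lemma mem_P p : (p \in P) = (0 < p <= n).
Proof. by case: apP => _ pP _; rewrite (perm_mem pP) mem_iota; lia. Qed.

Lemma index_nth_P i : i < n -> index (nth 0 P i) P = i.
Proof.
case: apP => _ pP _ hi.
by rewrite index_uniq ?size_P // (perm_uniq pP) iota_uniq.
Qed.

Lemma nth_P_range i : i < n -> 0 < nth 0 P i <= n.
Proof. by move=> hi; rewrite -mem_P mem_nth ?size_P. Qed.

Lemma index_P_lt p : 0 < p <= n -> index p P < n.
Proof. by move=> hp; rewrite -size_P index_mem mem_P. Qed.

Lemma nth_index_P p : 0 < p <= n -> nth 0 P (index p P) = p.
Proof. by move=> hp; rewrite nth_index ?mem_P. Qed.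

Lemma nth_P_succ i : i.+1 < n -> nth 0 P i.+1 = modr (nth 0 P i + k) n.
Proof. by case: apP => _ _ rec /rec. Qed.

Lemma nth_P_wrap : modr (nth 0 P n.-1 + k) n = nth 0 P 0.
Proof.
have kn := k_range; have hl := nth_P_range (ltac:(lia) : n.-1 < n).
set v := modr _ n.
have hv : 0 < v <= n by rewrite /v; modr_lia.
have := nth_index_P hv; have := index_P_lt hv.
case: (index v P) => [_ -> //|j hj].
rewrite nth_P_succ // => /modr_add_inj e.
have /(congr1 (index^~ P)) : nth 0 P j = nth 0 P n.-1.
  by apply: e => //; [apply: nth_P_range; lia | lia].
by rewrite !index_nth_P //; lia.
Qed.

Lemma nth_ternary q : 0 < q <= n -> nth 0 T q.-1 = lab (index q P).
Proof.
move=> hq; rewrite ternaryE (nth_map 0) ?size_iota; last lia.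
by rewrite nth_iota; [congr (lab (index _ P)); lia | lia].
Qed.

Lemma label_eq_no_cut i :
  lab i = lab i.+1 -> i != cutA n k P /\ i != cutB n k P.
Proof.
have c12 : c1 <= c2 by rewrite /cut1 /cut2; lia.
by move=> /(label_no_cut c12); rewrite /cut1 /cut2; lia.
Qed.

Lemma shift_ne_n x : 0 < x <= n -> index x P != cutA n k P ->
  modr (x + k) n != n.
Proof.
move=> hx hA; apply/eqP => /modr_shift_eq_n e.
by move: hA; rewrite /cutA -e ?eqxx //; have := k_range; lia.
Qed.

(* Away from the second cut, x + 1 is not the last entry of P: otherwise
   P[1] = x + 1 + k and x = P[1] - k - 1 would be the second cut. *)
Lemma succ_not_last x : 0 < x < n -> index x P != cutB n k P ->
  index x.+1 P != n.-1.
Proof.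
move=> hx hB; apply: contra hB => /eqP hlast.
have hx1 : 0 < x.+1 <= n by lia.
have hhead : head 0 P = modr (x.+1 + k) n.
  by rewrite -(nth_index_P hx1) hlast nth_P_wrap; case: (P).
by rewrite /cutB hhead modr_succ_shift_back //; have := k_range; lia.
Qed.

Lemma suffix_le_shift x : 0 < x <= n -> index x P != n.-1 ->
  lexle (Defs.suffix T x) (Defs.suffix T (modr (x + k) n)).
Proof.
have kn := k_range.
have [d] := ubnP (n - x); elim: d x => // d IH x hd hx hlast.
set y := modr (x + k) n.
have hy : 0 < y <= n by rewrite /y; modr_lia.
have ixn := index_P_lt hx.
have iy : index y P = (index x P).+1.
  by rewrite /y -{1}(nth_index_P hx) -nth_P_succ ?index_nth_P //; lia.
rewrite (suffix_cons _ x) ?(suffix_cons _ y) ?size_ternary // !nth_ternary // iy /=.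
have := label_mono c1 c2 (leqnSn (index x P)).
rewrite leq_eqVlt => /orP[/eqP heq | -> //].
rewrite heq eqxx ltnn /=.
have [nA nB] := label_eq_no_cut heq.
have [xn|xn|->] := ltngtP x n; last 2 first.
- lia.
- by rewrite /Defs.suffix drop_oversize // size_ternary.
have yn := shift_ne_n hx nA.
have -> : y.+1 = modr (x.+1 + k) n by rewrite modr_succ_shift //; lia.
by apply: IH; [lia | lia | apply: succ_not_last nB; lia].
Qed.

Lemma SA_ternary : SA T = P.
Proof.
case: apP => _ pP _.
rewrite /SA size_ternary.
set leT := fun i j => lexle (Defs.suffix T i) (Defs.suffix T j).
have -> : sort leT (iota 1 n) = sort leT P.
  apply/perm_sort_inP; rewrite 1?perm_sym //.
  - by move=> i j _ _; exact: lexle_total.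
  - by move=> j i l _ _ _; exact: lexle_trans.
  - move=> i j; rewrite !mem_iota => hi hj /andP[h1 h2].
    have := congr1 size (lexle_anti h1 h2).
    by rewrite /Defs.suffix !size_drop size_ternary; lia.
apply: sorted_sort; first by move=> j i l; exact: lexle_trans.
apply/(sortedP 0) => i; rewrite size_P => hi.
rewrite /leT nth_P_succ //; apply: suffix_le_shift.
  by apply: nth_P_range; lia.
by rewrite index_nth_P; lia.
Qed.

Lemma cutB_spec : cutB n k P < n.-1 /\
  nth 0 P (cutB n k P).+1 = modr (nth 0 P 0 - 1) n.
Proof.
have kn := k_range; have hp1 := nth_P_range (ltac:(lia) : 0 < n).
set w := modr (head 0 P + (n - k) - 1) n.
have hw : w = modr (nth 0 P 0 + (n - k) - 1) n by rewrite /w; case: (P).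
have wP : 0 < w <= n by rewrite hw; modr_lia.
have Bn : cutB n k P < n := index_P_lt wP.
have Bw : nth 0 P (cutB n k P) = w := nth_index_P wP.
have wk : modr (w + k) n = modr (nth 0 P 0 - 1) n by rewrite hw modr_sub_shift.
have Blast : cutB n k P != n.-1.
  apply/eqP => Bl; have := modr_pred_neq n_ge2 hp1.
  by rewrite -wk -Bw Bl nth_P_wrap eqxx.
by split; [lia | rewrite nth_P_succ ?Bw //; lia].
Qed.

Lemma index_pred j : j < n ->
  index (modr (nth 0 P j - 1) n) P = (j + (cutB n k P).+1) %% n.
Proof.
have [Bn Bs] := cutB_spec; set s := (cutB n k P).+1 in Bn Bs *.
have kn := k_range.
elim: j => [_|j IH hj].
  by rewrite -Bs index_nth_P ?modn_small //; lia.
have hj' := nth_P_range (ltac:(lia) : j < n).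
rewrite nth_P_succ // -modr_pred_shift //; last lia.
have /IH : j < n by lia.
set q := modr _ n => iq.
have hq : 0 < q <= n by rewrite /q; modr_lia.
rewrite -(nth_index_P hq) iq.
have -> : (j.+1 + s) %% n = ((j + s) %% n).+1 %% n.
  by rewrite addSn -addn1 -modnDml addn1.
have [jl|jl] := ltnP ((j + s) %% n).+1 n.
  by rewrite -(nth_P_succ jl) index_nth_P // (modn_small jl).
have -> : (j + s) %% n = n.-1 by have := ltn_pmod (j + s) (ltac:(lia) : 0 < n); lia.
have -> : n.-1.+1 = n by lia.
by rewrite nth_P_wrap index_nth_P ?modnn //; lia.
Qed.

Local Notation word := (map lab (iota 0 n)).

Lemma perm_ternary_word : perm_eq T word.
Proof.
case: apP => _ pP _.
have idxP : map (index^~ P) P = iota 0 n.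
  rewrite -[X in map _ X](mkseq_nth 0 P) size_P /mkseq -map_comp -[RHS]map_id.
  by apply/eq_in_map => j; rewrite mem_iota /= => hj; rewrite index_nth_P.
rewrite ternaryE (map_comp lab (index^~ P)) -idxP.
by apply/perm_map/perm_map; rewrite perm_sym.
Qed.

Lemma word_blocks : word = nseq c1 0 ++ nseq (c2 - c1) 1 ++ nseq (n - c2) 2.
Proof.
have kn := k_range; have [Bn _] := cutB_spec.
have An : cutA n k P < n by apply: index_P_lt; lia.
have c12 : c1 <= c2 by rewrite /cut1 /cut2; lia.
have c2n : c2 <= n by rewrite /cut2; lia.
have -> : iota 0 n = iota 0 c1 ++ iota c1 (c2 - c1) ++ iota c2 (n - c2).
  by rewrite -{1}(subnKC c2n) -{1}(subnKC c12) !iotaD add0n subnKC ?catA.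
by rewrite !map_cat; congr (_ ++ _ ++ _); apply: label_block => j hj;
  rewrite /label; repeat case: ifP => ?; lia.
Qed.

Lemma BWT_rot : BWT T = rot (cutB n k P).+1 word.
Proof.
have [Bn _] := cutB_spec.
rewrite -map_rot rot_iota0; last lia.
rewrite /BWT SA_ternary size_ternary -[X in map _ X](mkseq_nth 0 P) size_P.
rewrite /mkseq -!map_comp; apply/eq_in_map => j; rewrite mem_iota /= => hj.
have hpj := nth_P_range hj.
rewrite /charAt nth_ternary ?index_pred //; modr_lia.
Qed.

Lemma runs_BWT_ternary : runs (BWT T) = size (undup T).
Proof.
have -> : size (undup T) = size (undup (BWT T)).
  apply/perm_size/perm_undup => v.
  by rewrite BWT_rot mem_rot (perm_mem perm_ternary_word).
rewrite BWT_rot word_blocks.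
have : (cutB n k P).+1 = c1 \/ (cutB n k P).+1 = c2 by rewrite /cut1 /cut2; lia.
case=> ->.
- rewrite [rot _ _](_ : _ = nseq (c2 - c1) 1 ++ nseq (n - c2) 2 ++ nseq c1 0).
    exact: runs_three_blocks_undup.
  by rewrite -{1}(size_nseq c1 0) rot_size_cat catA.
- rewrite [rot _ _](_ : _ = nseq (n - c2) 2 ++ nseq c1 0 ++ nseq (c2 - c1) 1).
    exact: runs_three_blocks_undup.
  rewrite catA -(rot_size_cat (nseq c1 0 ++ _)) size_cat !size_nseq.
  by rewrite subnKC // /cut1 /cut2; lia.
Qed.

End ArithmeticProgression.

Theorem corollary6 (n k : nat) (P : seq nat) :
  2 <= n -> AP_perm n k P -> P <> rev (iota 1 n) ->
  (size (undup (ternary n k P)) = 2 -> runs (BWT (ternary n k P)) = 2) /\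
  (size (undup (ternary n k P)) = 3 -> runs (BWT (ternary n k P)) = 3).
Proof.
move=> n_ge2 apP _.
by rewrite (runs_BWT_ternary n_ge2 apP).
Qed.
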